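(* The size $b$ of the smallest bidirectional scheme satisfies $\mathsf{MS}_{\mathrm{sub}}(b,n)\ge 2$ and $\mathsf{MS}_{\mathrm{ins}}(b,n)\ge 2$.
   Context: Strings are over an alphabet $\Sigma$ with at least two characters; $\mathsf{ed}$ is the edit distance. $\mathsf{MS}_{\mathrm{sub}}(C,n)=\max_{T\in\Sigma^n}\{C(T')/C(T): T'\in\Sigma^n,\ \mathsf{ed}(T,T')=1\}$ and $\mathsf{MS}_{\mathrm{ins}}(C,n)$ is the same with $T'\in\Sigma^{n+1}$. A bidirectional scheme of $T$ (length $n$) is a factorization $T=f_1\cdots f_b$ where each phrase $f_j=T[p_j..p_j+\ell_j-1]$ is either a single character (ground phrase) or is given a source $q_j\neq p_j$ with $T[q_j..q_j+\ell_j-1]=f_j$. It defines $F:[0..n]\to[0..n]$ by $F(p_j)=0$ for ground phrases, $F(p_j+k)=q_j+k$ for $0\le k<\ell_j$ otherwise, and $F(0)=0$; the scheme is valid if for every $x$ some iterate $F^m(x)=0$ ($m\ge1$). $b(T)$ is the minimum number of phrases of a valid bidirectional scheme of $T$. *)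

From HB Require Import structures.
From mathcomp Require Import all_boot all_order all_algebra.
From mathcomp Require Import boolp.
Set Implicit Arguments. Unset Strict Implicit. Unset Printing Implicit Defensive.
Import Order.TTheory GRing.Theory Num.Theory.

Section Defs.
Variable Sigma : eqType.

(* Levenshtein (unit-cost) edit distance: substitutions, insertions, deletions. *)
Fixpoint ed (s t : seq Sigma) {struct s} : nat :=
  match s with
  | [::] => size t
  | x :: s' =>
      let fix edx (t : seq Sigma) : nat :=
        match t with
        | [::] => size s
        | y :: t' => minn (minn (ed s' t).+1 (edx t').+1) (ed s' t' + (x != y))
        end
      in edx t
  end.

(* A phrase: [None] = ground phrase (a single character);
   [Some (q, l)] = phrase of length l with source starting at position q
   (positions are 1-based, as in the paper). *)
Definition phrase := option (nat * nat).

Definition plen (ph : phrase) : nat :=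
  match ph with None => 1 | Some (_, l) => l end.

Definition phrase_ok (T : seq Sigma) (p : nat) (ph : phrase) : Prop :=
  match ph with
  | None => True
  | Some (q, l) =>
      [/\ 0 < l, 0 < q, q <> p, q + l <= size T + 1 &
          take l (drop q.-1 T) = take l (drop p.-1 T)]
  end.

Fixpoint sources_ok (T : seq Sigma) (p : nat) (s : seq phrase) : Prop :=
  match s with
  | [::] => True
  | ph :: s' => phrase_ok T p ph /\ sources_ok T (p + plen ph) s'
  end.

(* F restricted to positions >= p, the phrases of s starting at p *)
Fixpoint Ffrom (s : seq phrase) (p x : nat) : nat :=
  match s with
  | [::] => 0
  | ph :: s' =>
      if x < p + plen ph then
        match ph with None => 0 | Some (q, _) => q + (x - p) end
      else Ffrom s' (p + plen ph) x
  end.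

Definition Fmap (s : seq phrase) (x : nat) : nat :=
  if x == 0 then 0 else Ffrom s 1 x.

Definition valid_scheme (T : seq Sigma) (s : seq phrase) : Prop :=
  [/\ sumn (map plen s) = size T,
      sources_ok T 1 s &
      forall x, x <= size T -> exists m, 0 < m /\ iter m (Fmap s) x = 0].

Lemma sources_ok_ground T p n : sources_ok T p (nseq n None).
Proof. by elim: n p => [|n IH] p //=; split. Qed.

Lemma Ffrom_ground n p x : Ffrom (nseq n None) p x = 0.
Proof. by elim: n p => [|n IH] p //=; case: ifP. Qed.

Lemma valid_scheme_exists (T : seq Sigma) :
  exists k, `[< exists s, valid_scheme T s /\ size s = k >].
Proof.
exists (size T); apply/asboolP; exists (nseq (size T) None); split; last first.
  by rewrite size_nseq.
split.
- by elim: (size T) => //= n ->.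
- exact: sources_ok_ground.
- move=> x _; exists 1; split => //=.
  by rewrite /Fmap Ffrom_ground; case: (x == 0).
Qed.

Definition bidir (T : seq Sigma) : nat := ex_minn (valid_scheme_exists T).

End Defs.

Section Sens.
Variable Sigma : finType.
Local Open Scope ring_scope.

Definition MS_sub (C : seq Sigma -> nat) (n : nat) : rat :=
  \big[Num.max/0]_(T : n.-tuple Sigma)
     \big[Num.max/0]_(T' : n.-tuple Sigma | ed T T' == 1%N)
        ((C T')%:R / (C T)%:R).

Definition MS_ins (C : seq Sigma -> nat) (n : nat) : rat :=
  \big[Num.max/0]_(T : n.-tuple Sigma)
     \big[Num.max/0]_(T' : n.+1.-tuple Sigma | ed T T' == 1%N)
        ((C T')%:R / (C T)%:R).
End Sens.

(** The run [a^n] has a two-phrase scheme: a ground [a] followed by a copy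
    of [T[1..n-1]] shifted by one, which [F] unwinds position by position.
    Changing one letter gives [aab a^m], which needs four phrases: the unique
    [b] forces a ground phrase, no copied phrase or source can contain the
    position of [b], and the run [a^m] after it cannot be one copied phrase,
    since every source of that length either overlaps the [b] or runs past
    the end of the string.  The same string, read as an insertion into
    [a^(m+2)], gives the insertion bound. *)

From HB Require Import structures.
From mathcomp Require Import all_boot all_order all_algebra.
From mathcomp Require Import zify boolp.
Import Order.TTheory GRing.Theory Num.Theory.

Set Implicit Arguments.
Unset Strict Implicit.
Unset Printing Implicit Defensive.

Section EditDistance.
Variable S : eqType.
Implicit Types (r s t : seq S) (x y : S).

Lemma ed_cons x y s t :
  ed (x :: s) (y :: t) =
  minn (minn (ed s (y :: t)).+1 (ed (x :: s) t).+1) (ed s t + (x != y)).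
Proof. by []. Qed.

Lemma ed_refl s : ed s s = 0.
Proof. by elim: s => [|x s IH] //; rewrite ed_cons IH eqxx; lia. Qed.

Lemma ed_eq0 s t : (ed s t == 0) = (s == t).
Proof.
apply/idP/eqP => [|-> ]; last by rewrite ed_refl.
elim: s t => [|x s IH] [|y t] //; rewrite ed_cons => h0.
have /IH -> : ed s t == 0 by lia.
by have /negbFE/eqP -> : (x != y) = false by lia.
Qed.

Lemma ed_catl r s t : ed (r ++ s) (r ++ t) <= ed s t.
Proof.
elim: r => [|x r IH] //; apply: leq_trans IH.
by rewrite !cat_cons ed_cons eqxx addn0 geq_minr.
Qed.

Lemma ed_subst r x y s : x != y -> ed (r ++ x :: s) (r ++ y :: s) = 1.
Proof.
move=> xy; apply/anti_leq/andP; split.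
  by apply: leq_trans (ed_catl _ _ _) _; rewrite ed_cons ed_refl xy geq_minr.
by rewrite lt0n ed_eq0 eqseq_cat // eqseq_cons (negbTE xy) andbF.
Qed.

Lemma ed_insert r y s : ed (r ++ s) (r ++ y :: s) = 1.
Proof.
apply/anti_leq/andP; split.
  apply: leq_trans (ed_catl _ _ _) _.
  by case: s => [|x s] //; rewrite ed_cons ed_refl; lia.
rewrite lt0n ed_eq0; apply/eqP => /(congr1 size).
by rewrite !size_cat /=; lia.
Qed.

End EditDistance.

Section SmallestScheme.
Variable S : eqType.
Implicit Types (T : seq S) (s : seq phrase).

Lemma bidir_le_size T s : valid_scheme T s -> bidir T <= size s.
Proof.
by rewrite /bidir; case: ex_minnP => k _ kmin hs; apply/kmin/asboolP; exists s.
Qed.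

Lemma bidir_ge T k : (forall s, valid_scheme T s -> k <= size s) -> k <= bidir T.
Proof. by rewrite /bidir; case: ex_minnP => k' /asboolP [s [hs <-]] _ /(_ s hs). Qed.

Lemma bidir_gt0 T : 0 < size T -> 0 < bidir T.
Proof. by move=> hT; apply: bidir_ge => -[|ph s] [] //= hs; rewrite -hs in hT. Qed.

Definition run_scheme n : seq phrase := [:: None; Some (1, n.-1)].

Lemma run_scheme_valid (c : S) n : 1 < n -> valid_scheme (nseq n c) (run_scheme n).
Proof.
move=> hn; have Fprev x : 1 < x <= n -> Fmap (run_scheme n) x = x.-1.
  by move=> hx; rewrite /Fmap /=; repeat case: ifP; lia.
have Fiter x : 0 < x <= n -> iter x (Fmap (run_scheme n)) x = 0.
  elim: x => [|x IH] // hx; rewrite iterSr.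
  case: x IH hx => [|x] IH hx; first by rewrite /Fmap.
  by rewrite Fprev ?IH; lia.
split.
- by rewrite size_nseq /=; lia.
- do ![split] => //=; rewrite ?size_nseq; try lia.
  by rewrite !drop_nseq !take_nseq //; lia.
- move=> [|x]; rewrite size_nseq => hx; first by exists 1.
  by exists x.+1; rewrite Fiter; lia.
Qed.

Lemma bidir_nseq (c : S) n : 1 < n -> bidir (nseq n c) <= 2.
Proof. by move/(run_scheme_valid c)/bidir_le_size. Qed.

Lemma shared_block_unique T (x0 c : S) i u v l :
  nth x0 T i = c -> (forall j, j < size T -> nth x0 T j = c -> j = i) ->
  take l (drop u T) = take l (drop v T) -> v + l <= size T ->
  u <= i < u + l -> u = v.
Proof.
move=> Ti ci eq_blocks vl ui; pose k := i - u.
have := congr1 (fun w => nth x0 w k) eq_blocks.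
rewrite !nth_take ?nth_drop; try lia.
have -> : u + k = i by lia.
by rewrite Ti => /esym /ci; lia.
Qed.

End SmallestScheme.

Section OneLetterChange.
Variables (S : eqType) (a b : S).
Hypothesis ab : a != b.

Definition aab_run m : seq S := [:: a, a, b & nseq m a].

Lemma nth_aab_run m j : nth a (aab_run m) j = if j == 2 then b else a.
Proof. by case: j => [|[|[|j]]] //=; rewrite nth_nseq if_same. Qed.

Lemma aab_run_copy_avoids_b m p q l :
  0 < p -> p + l <= m + 4 -> phrase_ok (aab_run m) p (Some (q, l)) ->
  ~ (p <= 3 < p + l) /\ ~ (q <= 3 < q + l).
Proof.
move=> p0 pl [_ q0 qp ql eq_blocks].
have sizeU : size (aab_run m) = m + 3 by rewrite /= size_nseq; lia.
have b_only j : j < size (aab_run m) -> nth a (aab_run m) j = b -> j = 2.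
  by rewrite nth_aab_run; case: eqP => // _ _ /eqP; rewrite (negbTE ab).
have bU : nth a (aab_run m) 2 = b by rewrite nth_aab_run.
split=> cover.
- have := shared_block_unique bU b_only (esym eq_blocks); lia.
- have := shared_block_unique bU b_only eq_blocks; lia.
Qed.

(* Each term counts a phrase that every scheme covering positions [p..m+3]
   must contain: one before [b], [b] itself, and two for the run [a^m]. *)
Definition aab_run_need m p := (p <= 2) + (p <= 3) + (p <= 4) + (p < m + 4).

Lemma aab_run_need_le m p s :
  2 < m -> 0 < p -> sources_ok (aab_run m) p s ->
  p + sumn (map plen s) = m + 4 -> aab_run_need m p <= size s.
Proof.
rewrite /aab_run_need => m3; elim: s p => [|ph s IH] p p0 /=; first by lia.
move=> [ok_ph ok_s] cover; have {IH ok_s} := IH _ (ltn_addr _ p0) ok_s.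
case: ph ok_ph cover => [[q l]|] ok_ph /= cover; last by lia.
have [l0 q0 qp ql _] := ok_ph.
have [] := aab_run_copy_avoids_b p0 _ ok_ph; first by lia.
rewrite /= size_nseq in ql; lia.
Qed.

Lemma bidir_aab_run m : 2 < m -> 4 <= bidir (aab_run m).
Proof.
move=> m3; apply: bidir_ge => s [cover ok _].
apply: leq_trans (aab_run_need_le m3 _ ok _) => //.
  by rewrite /aab_run_need; lia.
by rewrite cover /= size_nseq; lia.
Qed.

End OneLetterChange.

Local Open Scope ring_scope.

Lemma ratio_ge2 (x y : nat) : (0 < x)%N -> (2 * x <= y)%N -> 2 <= (y%:R / x%:R : rat).
Proof. by move=> x0 xy; rewrite ler_pdivlMr ?ltr0n // -natrM ler_nat. Qed.

Section Sensitivity.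
Variables (Sigma : finType) (C : seq Sigma -> nat) (n : nat).
Implicit Types T : seq Sigma.

Lemma MS_sub_ge T T' (hT : size T = n) (hT' : size T' = n) :
  ed T T' = 1%N -> (C T')%:R / (C T)%:R <= MS_sub C n.
Proof.
move=> ed1; pose t := Tuple (introT eqP hT); pose t' := Tuple (introT eqP hT').
apply: le_trans (le_bigmax _ _ t).
by apply: (le_bigmax_cond _ (j := t')) => /=; apply/eqP.
Qed.

Lemma MS_ins_ge T T' (hT : size T = n) (hT' : size T' = n.+1) :
  ed T T' = 1%N -> (C T')%:R / (C T)%:R <= MS_ins C n.
Proof.
move=> ed1; pose t := Tuple (introT eqP hT); pose t' := Tuple (introT eqP hT').
apply: le_trans (le_bigmax _ _ t).
by apply: (le_bigmax_cond _ (j := t')) => /=; apply/eqP.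
Qed.

End Sensitivity.

Theorem mainTheorem6 (Sigma : finType) (hSigma : (1 < #|Sigma|)%N) :
  exists N : nat, forall n : nat, (N <= n)%N ->
    2 <= MS_sub (@bidir Sigma) n /\ 2 <= MS_ins (@bidir Sigma) n.
Proof.
have [a [b [_ _ ab]]] := card_gt1P hSigma.
exists 6%N => n hn.
have [m -> {n hn} m3] : exists2 m, n = m.+3 & (2 < m)%N by exists (n - 3)%N; lia.
have [run_gt0 run_le2] : (0 < bidir (nseq m.+3 a))%N /\ (bidir (nseq m.+3 a) <= 2)%N.
  by rewrite bidir_gt0 ?size_nseq ?bidir_nseq.
have ratio k : (2 < k)%N ->
    2 <= (bidir (aab_run a b k))%:R / (bidir (nseq m.+3 a))%:R :> rat.
  move=> k2; apply: ratio_ge2 => //.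
  by apply: leq_trans (bidir_aab_run ab k2); lia.
split.
- apply: le_trans (ratio m m3) (MS_sub_ge _ _ _ (ed_subst [:: a; a] (nseq m a) ab));
    by rewrite /= size_nseq.
- apply: le_trans (ratio m.+1 (leqW m3)) (MS_ins_ge _ _ _ (ed_insert [:: a; a] b (nseq m.+1 a)));
    by rewrite /= size_nseq.
Qed.
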